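(* Let $I$ be an interval containing $t_0$, let $\mu$ be a nonvanishing differentiable real function on $I$ and $\omega^2$ a real function on $I$. Let $r(t)$ be the solution of the initial value problem $$\ddot r+\frac{\dot\mu(t)}{\mu(t)}\dot r+\omega^2(t) r=0,\qquad r(t_0)=r_0\neq 0,\quad \dot r(t_0)=0,$$ and define $$\eta(x,t)=\frac{r(t_0)}{r(t)}\,x,\qquad \tau(t)=r^2(t_0)\int_{t_0}^{t}\frac{d\xi}{\mu(\xi)r^2(\xi)}\quad(\text{so }\tau(t_0)=0).$$ Let $\varphi(\eta,\tau)$ be the solution of the initial value problem for the classical heat equation $$\varphi_\tau=\tfrac12\varphi_{\eta\eta},\qquad \varphi(\eta,0)=\Phi(\eta,t_0),\quad -\infty<\eta<\infty.$$ Then the initial value problem for the variable parametric parabolic equation $$\frac{\partial\Phi}{\partial t}=\frac{1}{2\mu(t)}\frac{\partial^2\Phi}{\partial x^2}+\frac{\mu(t)\omega^2(t)}{2}x^2\Phi,\qquad \Phi(x,t)|_{t=t_0}=\Phi(x,t_0),\quad -\infty<x<\infty,$$ has the solution $$\Phi(x,t)=\sqrt{\frac{r(t_0)}{r(t)}}\;\exp\!\left(-\frac{\mu(t)\dot r(t)}{2r(t)}x^2\right)\varphi\big(\eta(x,t),\tau(t)\big).$$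
   Context: Dots denote derivatives with respect to $t$. The formula is considered for $t$ at which $r(t)\neq 0$; the square root (equivalently $\tfrac12\ln(r(t_0)/r(t))$ in the exponent) is allowed to be complex-valued. *)

From Stdlib Require Import Reals.
From Coquelicot Require Export Coquelicot.
Open Scope R_scope.

Definition tau (mu r : R -> R) (t0 t : R) : R :=
  r t0 ^ 2 * RInt (fun xi => / (mu xi * r xi ^ 2)) t0 t.

Definition eta (r : R -> R) (t0 x t : R) : R := r t0 / r t * x.

Definition Phi_sol (mu r : R -> R) (phi : R -> R -> R) (t0 x t : R) : R :=
  sqrt (r t0 / r t) * exp (- (mu t * Derive r t) / (2 * r t) * x ^ 2)
  * phi (eta r t0 x t) (tau mu r t0 t).

Definition in_I (a b : Rbar) (t : R) : Prop := Rbar_lt a t /\ Rbar_lt t b.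

Definition nonvanishing_between (r : R -> R) (t0 t : R) : Prop :=
  forall s, Rmin t0 t <= s <= Rmax t0 t -> r s <> 0.

(* With c = r(t0)/r, A = sqrt c and B = -mu r'/(2 r) one has
   Phi = A exp(B x^2) phi(c x, tau).  Substituted into
   Phi_t - Phi_xx/(2 mu) - mu w2 x^2 Phi/2, the coefficients of phi_etaeta, phi_eta,
   phi and x^2 phi vanish separately: the first because tau' = c^2/mu and
   phi_tau = phi_etaeta/2, the next two because c'/c = 2A'/A = -r'/r = 2B/mu, and the
   last because the equation of r turns into the Riccati equation
   B' = 2B^2/mu + mu w2/2.  Positivity of r(t0)/r(t) (intermediate value theorem)
   makes A differentiable, and tau' comes from the fundamental theorem of calculus,
   the integrand being continuous near the segment [t0, t]. *)
From Stdlib Require Import Reals Lra.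
From Coquelicot Require Import Coquelicot.
Open Scope R_scope.

Lemma in_I_between a b t0 t u : in_I a b t0 -> in_I a b t ->
  Rmin t0 t <= u <= Rmax t0 t -> in_I a b u.
Proof.
  intros [Ha0 Hb0] [Ha Hb] [Hu1 Hu2]. split.
  - apply Rbar_lt_le_trans with (Rmin t0 t); [|simpl; lra].
    unfold Rmin; destruct Rle_dec; auto.
  - apply Rbar_le_lt_trans with (Rmax t0 t); [simpl; lra|].
    unfold Rmax; destruct Rle_dec; auto.
Qed.

Lemma locally_in_I a b t : in_I a b t -> locally t (in_I a b).
Proof.
  intros [Ha Hb]. apply filter_and; [exact (open_Rbar_gt a t Ha)|exact (open_Rbar_lt b t Hb)].
Qed.

Lemma Rabs_between_le t u z : Rmin t u <= z <= Rmax t u -> Rabs (z - t) <= Rabs (u - t).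
Proof. unfold Rmin, Rmax; destruct Rle_dec; intros; split_Rabs; lra. Qed.

Lemma continuous_nonzero_same_sign (f : R -> R) lo hi : lo <= hi ->
  (forall u, lo <= u <= hi -> continuity_pt f u) ->
  (forall u, lo <= u <= hi -> f u <> 0) -> 0 < f lo * f hi.
Proof.
  intros Hle Hc Hnz.
  assert (no_sign_change : forall g : R -> R,
    (forall u, lo <= u <= hi -> continuity_pt g u) ->
    (forall u, lo <= u <= hi -> g u <> 0) -> ~ (g lo < 0 < g hi)).
  { intros g Hgc Hgnz [Hlo Hhi].
    destruct (Rle_lt_or_eq_dec _ _ Hle) as [Hlt|<-]; [|lra].
    destruct (Ranalysis5.IVT_interv g lo hi Hgc Hlt Hlo Hhi) as [z [Hz Hgz]].
    exact (Hgnz z Hz Hgz). }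
  assert (Hlo : f lo <> 0) by (apply Hnz; lra).
  assert (Hhi : f hi <> 0) by (apply Hnz; lra).
  pose proof (no_sign_change f Hc Hnz) as Hnot_up.
  pose proof (no_sign_change (fun u => - f u) (fun u Hu => continuity_pt_opp f u (Hc u Hu))
    (fun u Hu => Ropp_neq_0_compat _ (Hnz u Hu))) as Hnot_down.
  destruct (Rlt_or_le 0 (f lo)), (Rlt_or_le 0 (f hi)); nra.
Qed.

Lemma ratio_pos_of_nonvanishing (r : R -> R) t0 t :
  (forall u, Rmin t0 t <= u <= Rmax t0 t -> continuity_pt r u) ->
  nonvanishing_between r t0 t -> 0 < r t0 / r t.
Proof.
  intros Hc Hnz.
  pose proof (continuous_nonzero_same_sign r _ _ (Rmin_Rmax t0 t) Hc Hnz) as Hpos.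
  assert (Hrt : r t <> 0) by (apply Hnz; split; [apply Rmin_r|apply Rmax_r]).
  replace (r t0 / r t) with (r t0 * r t / (r t * r t)) by (field; auto).
  apply Rdiv_lt_0_compat; [|nra].
  unfold Rmin, Rmax in Hpos; destruct Rle_dec; nra.
Qed.

Lemma is_derive_RInt_near_segment (f : R -> R) (P : R -> Prop) t0 t :
  (forall u, P u -> continuous f u) ->
  (forall u, Rmin t0 t <= u <= Rmax t0 t -> P u) -> locally t P ->
  is_derive (fun s => RInt f t0 s) t (f t).
Proof.
  intros Hc Hseg [eps Heps].
  apply (is_derive_RInt f (fun s => RInt f t0 s) t0 t);
    [|apply Hc, Hseg; split; [apply Rmin_r|apply Rmax_r]].
  exists eps. intros u Hu. apply (RInt_correct f t0 u).
  apply (ex_RInt_Chasles f t0 t u).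
  - apply (ex_RInt_continuous f t0 t). intros z Hz. apply Hc, Hseg, Hz.
  - apply (ex_RInt_continuous f t u). intros z Hz. apply Hc, Heps.
    exact (Rle_lt_trans _ _ _ (Rabs_between_le t u z Hz) Hu).
Qed.

Lemma tau_derive a b (mu r : R -> R) t0 t :
  (forall u, in_I a b u -> mu u <> 0 /\ ex_derive mu u) ->
  (forall u, in_I a b u -> ex_derive r u) ->
  in_I a b t0 -> in_I a b t -> nonvanishing_between r t0 t ->
  is_derive (fun s => tau mu r t0 s) t (r t0 ^ 2 / (mu t * r t ^ 2)).
Proof.
  intros Hmu Hr HI0 HIt Hnz.
  assert (Hrt : r t <> 0) by (apply Hnz; split; [apply Rmin_r|apply Rmax_r]).
  unfold tau, Rdiv.
  apply (is_derive_scal (fun s => RInt (fun xi => / (mu xi * r xi ^ 2)) t0 s) t (r t0 ^ 2)).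
  apply (is_derive_RInt_near_segment (fun xi => / (mu xi * r xi ^ 2))
    (fun u => in_I a b u /\ r u <> 0)).
  - intros u [HIu Hru]. destruct (Hmu u HIu) as [Hmu0 Hdmu].
    apply (ex_derive_continuous (fun xi => / (mu xi * r xi ^ 2)) u).
    auto_derive. repeat split; auto.
    rewrite Rmult_1_r. repeat apply Rmult_integral_contrapositive_currified; auto.
  - intros u Hu. split; [exact (in_I_between a b t0 t u HI0 HIt Hu)|exact (Hnz u Hu)].
  - apply filter_and; [exact (locally_in_I a b t HIt)|].
    apply (ex_derive_continuous r t (Hr t HIt) (fun y => y <> 0)), (open_neq 0 _ Hrt).
Qed.

Lemma chirp_scaled_derive2 (q k c : R) (p : R -> R) x :
  (forall e, ex_derive p e) -> (forall e, ex_derive (Derive p) e) ->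
  ex_derive (fun y => q * exp (k * y ^ 2) * p (c * y)) x /\
  ex_derive (Derive (fun y => q * exp (k * y ^ 2) * p (c * y))) x /\
  Derive_n (fun y => q * exp (k * y ^ 2) * p (c * y)) 2 x =
  q * exp (k * x ^ 2) * ((2 * k * x) ^ 2 * p (c * x) + 2 * k * p (c * x)
     + 4 * k * x * c * Derive p (c * x) + c ^ 2 * Derive (Derive p) (c * x)).
Proof.
  intros Hp1 Hp2.
  set (d1 := fun y => q * exp (k * y ^ 2) * (2 * k * y * p (c * y) + c * Derive p (c * y))).
  assert (Hd1 : forall y, is_derive (fun y => q * exp (k * y ^ 2) * p (c * y)) y (d1 y)).
  { intros y. auto_derive; [apply Hp1|]. unfold d1. change (fun z => p z) with p.
    replace (k * (y * (y * 1))) with (k * y ^ 2) by ring. ring. }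
  assert (Hd2 : is_derive d1 x (q * exp (k * x ^ 2) * ((2 * k * x) ^ 2 * p (c * x)
     + 2 * k * p (c * x) + 4 * k * x * c * Derive p (c * x)
     + c ^ 2 * Derive (Derive p) (c * x)))).
  { unfold d1. auto_derive; [repeat split; auto|].
    change (fun z => p z) with p. change (fun z => Derive p z) with (Derive p).
    replace (k * (x * (x * 1))) with (k * x ^ 2) by ring. ring. }
  assert (HD1 : forall y, Derive (fun y => q * exp (k * y ^ 2) * p (c * y)) y = d1 y)
    by (intros y; apply is_derive_unique, Hd1).
  split; [exists (d1 x); apply Hd1|]. split.
  - apply ex_derive_ext with d1; [intros; symmetry; apply HD1|eexists; exact Hd2].
  - cbn [Derive_n]. transitivity (Derive d1 x);
      [apply Derive_ext, HD1|apply is_derive_unique, Hd2].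
Qed.

Lemma is_derive_chirp_product (A B F : R -> R) (k t dA dB dF : R) :
  is_derive A t dA -> is_derive B t dB -> is_derive F t dF ->
  is_derive (fun s => A s * exp (B s * k) * F s) t
    ((dA + A t * dB * k) * exp (B t * k) * F t + A t * exp (B t * k) * dF).
Proof.
  intros HA HB HF.
  auto_derive; [repeat split; eexists; eauto|].
  change (fun s => A s) with A; change (fun s => B s) with B; change (fun s => F s) with F.
  rewrite (is_derive_unique A t dA HA), (is_derive_unique B t dB HB),
    (is_derive_unique F t dF HF).
  ring.
Qed.

Definition classical_heat_solution_at (phi : R -> R -> R) (T : R) : Prop :=
  forall e,
    ex_derive (fun y => phi y T) e /\
    ex_derive (Derive (fun y => phi y T)) e /\
    differentiable_pt_lim phi e T (Derive (fun y => phi y T) e) (Derive (fun s => phi e s) T) /\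
    Derive (fun s => phi e s) T = / 2 * Derive_n (fun y => phi y T) 2 e.

Definition parabolic_solution_at (mu w2 : R -> R) (Phi : R -> R -> R) (t x : R) : Prop :=
  ex_derive (fun y => Phi y t) x /\
  ex_derive (Derive (fun y => Phi y t)) x /\
  is_derive (fun s => Phi x s) t
    (/ (2 * mu t) * Derive_n (fun y => Phi y t) 2 x + mu t * w2 t / 2 * x ^ 2 * Phi x t).

Definition amplitude (r : R -> R) (t0 s : R) : R := sqrt (r t0 / r s).

Definition chirp (mu r : R -> R) (s : R) : R := - (mu s * Derive r s) / (2 * r s).

Lemma Phi_sol_gauge mu r phi t0 x s :
  Phi_sol mu r phi t0 x s =
  amplitude r t0 s * exp (chirp mu r s * x ^ 2) * phi (r t0 / r s * x) (tau mu r t0 s).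
Proof. reflexivity. Qed.

Section GaugeTransform.

Variables (mu w2 r : R -> R) (t0 t : R).
Hypotheses (mu_neq0 : mu t <> 0) (mu_derivable : ex_derive mu t)
  (r_derivable : ex_derive r t) (r'_derivable : ex_derive (Derive r) t)
  (ratio_pos : 0 < r t0 / r t).

(* [r t0 / 0 = 0] in Rocq, so positivity of the ratio already excludes [r t = 0]. *)
Lemma r_neq0 : r t <> 0.
Proof. intros Hr. rewrite Hr, Rdiv_0_r in ratio_pos. lra. Qed.

Lemma ratio_derive :
  is_derive (fun s => r t0 / r s) t (- (r t0 / r t) * (Derive r t / r t)).
Proof.
  pose proof r_neq0 as Hr. auto_derive; [split; auto|].
  change (fun s => r s) with r. field. auto.
Qed.

Lemma amplitude_derive :
  is_derive (amplitude r t0) t (- amplitude r t0 t * Derive r t / (2 * r t)).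
Proof.
  unfold amplitude.
  replace (- sqrt (r t0 / r t) * Derive r t / (2 * r t))
    with (- (r t0 / r t) * (Derive r t / r t) / (2 * sqrt (r t0 / r t))).
  - exact (is_derive_sqrt _ t _ ratio_derive ratio_pos).
  - pose proof r_neq0 as Hr.
    pose proof (sqrt_sqrt _ (Rlt_le _ _ ratio_pos)) as Hsqrt.
    pose proof (sqrt_lt_R0 _ ratio_pos) as Hsqrt_pos.
    rewrite <- Hsqrt at 1. field. lra.
Qed.

Hypothesis r_ode : Derive_n r 2 t + Derive mu t / mu t * Derive r t + w2 t * r t = 0.

Lemma chirp_riccati :
  is_derive (chirp mu r) t (2 * chirp mu r t ^ 2 / mu t + mu t * w2 t / 2).
Proof.
  pose proof r_neq0 as Hr. unfold chirp.
  auto_derive; [repeat split; auto|].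
  change (fun s => r s) with r; change (fun s => mu s) with mu.
  change (fun s => Derive r s) with (Derive r).
  change (Derive_n r 2 t) with (Derive (Derive r) t) in r_ode.
  replace (Derive (Derive r) t) with (- (Derive mu t / mu t * Derive r t) - w2 t * r t)
    by lra.
  field. auto.
Qed.

Hypothesis tau_derivative :
  is_derive (fun s => tau mu r t0 s) t (r t0 ^ 2 / (mu t * r t ^ 2)).

Lemma heat_argument_derive (phi : R -> R -> R) (x dphi_eta dphi_tau : R) :
  differentiable_pt_lim phi (r t0 / r t * x) (tau mu r t0 t) dphi_eta dphi_tau ->
  is_derive (fun s => phi (r t0 / r s * x) (tau mu r t0 s)) t
    (dphi_eta * (- (r t0 / r t) * (Derive r t / r t) * x)
     + dphi_tau * (r t0 ^ 2 / (mu t * r t ^ 2))).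
Proof.
  intros Hphi. apply is_derive_Reals.
  apply (derivable_pt_lim_comp_2d phi (fun s => r t0 / r s * x) (fun s => tau mu r t0 s));
    [exact Hphi| |]; apply is_derive_Reals; [|exact tau_derivative].
  exact (is_derive_scal_l (V := R_NormedModule) _ t _ x ratio_derive).
Qed.

Lemma Phi_sol_solves_at (phi : R -> R -> R) (x : R) :
  classical_heat_solution_at phi (tau mu r t0 t) ->
  parabolic_solution_at mu w2 (Phi_sol mu r phi t0) t x.
Proof.
  intros Hheat.
  set (T := tau mu r t0 t) in *; set (c := r t0 / r t).
  destruct (Hheat (c * x)) as [_ [_ [Hdiff Hphi_tau]]].
  destruct (chirp_scaled_derive2 (amplitude r t0 t) (chirp mu r t) c (fun y => phi y T) x
    (fun e => proj1 (Hheat e)) (fun e => proj1 (proj2 (Hheat e)))) as [S1 [S2 S3]].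
  split; [exact S1|]. split; [exact S2|].
  change (Derive_n (fun y => Phi_sol mu r phi t0 y t) 2 x) with
    (Derive_n (fun y => amplitude r t0 t * exp (chirp mu r t * y ^ 2) * phi (c * y) T) 2 x).
  rewrite S3, Phi_sol_gauge.
  change (Derive_n (fun y => phi y T) 2 (c * x)) with
    (Derive (Derive (fun y => phi y T)) (c * x)) in Hphi_tau.
  apply (@eq_ind R _ (is_derive _ t) (is_derive_chirp_product _ _ _ (x ^ 2) t _ _ _
    amplitude_derive chirp_riccati (heat_argument_derive phi x _ _ Hdiff))).
  rewrite Hphi_tau. pose proof r_neq0 as Hr. unfold T, c, chirp.
  field. auto.
Qed.

End GaugeTransform.

Lemma Phi_sol_at_t0 mu r phi t0 x :
  r t0 <> 0 -> Derive r t0 = 0 -> Phi_sol mu r phi t0 x t0 = phi x 0.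
Proof.
  intros Hr0 Hdr0. unfold Phi_sol, eta, tau. rewrite RInt_point, Hdr0.
  replace (r t0 / r t0 * x) with x by (field; auto).
  replace (r t0 / r t0) with 1 by (field; auto).
  replace (- (mu t0 * 0) / (2 * r t0) * x ^ 2) with 0 by (field; auto).
  rewrite sqrt_1, exp_0, !Rmult_1_l. f_equal. unfold zero; simpl; ring.
Qed.

Theorem proposition1 (a b : Rbar) (t0 r0 : R) (mu w2 r Phi0 : R -> R)
  (phi : R -> R -> R) :
  in_I a b t0 ->
  (forall t, in_I a b t -> mu t <> 0 /\ ex_derive mu t) ->
  (forall t, in_I a b t ->
     ex_derive r t /\ ex_derive (Derive r) t /\
     Derive_n r 2 t + Derive mu t / mu t * Derive r t + w2 t * r t = 0) ->
  r t0 = r0 -> r0 <> 0 -> Derive r t0 = 0 ->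
  (forall t, in_I a b t -> nonvanishing_between r t0 t ->
     forall e,
       ex_derive (fun y => phi y (tau mu r t0 t)) e /\
       ex_derive (Derive (fun y => phi y (tau mu r t0 t))) e /\
       differentiable_pt_lim phi e (tau mu r t0 t)
         (Derive (fun y => phi y (tau mu r t0 t)) e)
         (Derive (fun s => phi e s) (tau mu r t0 t)) /\
       Derive (fun s => phi e s) (tau mu r t0 t)
         = / 2 * Derive_n (fun y => phi y (tau mu r t0 t)) 2 e) ->
  (forall e, phi e 0 = Phi0 e) ->
  (forall x, Phi_sol mu r phi t0 x t0 = Phi0 x) /\
  (forall t, in_I a b t -> nonvanishing_between r t0 t ->
     forall x,
       ex_derive (fun y => Phi_sol mu r phi t0 y t) x /\
       ex_derive (Derive (fun y => Phi_sol mu r phi t0 y t)) x /\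
       is_derive (fun s => Phi_sol mu r phi t0 x s) t
         (/ (2 * mu t) * Derive_n (fun y => Phi_sol mu r phi t0 y t) 2 x
          + mu t * w2 t / 2 * x ^ 2 * Phi_sol mu r phi t0 x t)).
Proof.
  intros HI0 Hmu Hr Hr0 Hr0_neq0 Hdr0 Hheat Hinit. split.
  - intros x. rewrite <- Hinit. apply Phi_sol_at_t0; congruence.
  - intros t HIt Hnz x.
    destruct (Hmu t HIt) as [Hmu_t Hdmu_t]; destruct (Hr t HIt) as [Hdr_t [Hddr_t Hode_t]].
    assert (Hratio : 0 < r t0 / r t).
    { apply ratio_pos_of_nonvanishing; [|exact Hnz]. intros u Hu.
      apply continuity_pt_filterlim, (ex_derive_continuous r u), Hr.
      exact (in_I_between a b t0 t u HI0 HIt Hu). }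
    apply (Phi_sol_solves_at mu w2 r t0 t Hmu_t Hdmu_t Hdr_t Hddr_t Hratio Hode_t).
    + exact (tau_derive a b mu r t0 t Hmu (fun u Hu => proj1 (Hr u Hu)) HI0 HIt Hnz).
    + exact (Hheat t HIt Hnz).
Qed.
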